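(* Let $\gamma_*\in(0,1]$ and $\zeta_*\in(0,1]$. Define for $t\in\mathbb{R}$ \[ \tilde f(t)=\frac{1}{\sqrt{2\pi}}\int_{-\infty}^t\Big[(1-\tfrac12\zeta_* )e^{-x^2/2}+\tfrac12\zeta_*e^{-(x-2\gamma_* )^2/2}-(1-\zeta_* )e^{-x^2/2}-\zeta_*e^{-(x-\gamma_* )^2/2}\Big]dx, \] and $f(t)=|\tilde f(t)|$. Let \[ t_+=\tfrac32\gamma_*+\tfrac{1}{\gamma_*}\log\left(1-\sqrt{1-e^{-\gamma_*^2}}\right),\qquad t_-=\tfrac32\gamma_*+\tfrac{1}{\gamma_*}\log\left(1+\sqrt{1-e^{-\gamma_*^2}}\right). \] Then the set of maximizers of $f$ over $\mathbb{R}$ is exactly $\{t_+,t_-\}$, and $\tilde f(t_+)>0$, $\tilde f(t_-)<0$. *)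

From Stdlib Require Import Reals.
From Coquelicot Require Import Coquelicot.
Open Scope R_scope.

Definition integrand (g z x : R) : R :=
  (1 - z/2) * exp (- x^2 / 2) + z/2 * exp (- (x - 2*g)^2 / 2)
  - (1 - z) * exp (- x^2 / 2) - z * exp (- (x - g)^2 / 2).

Definition ftilde (g z t : R) : R :=
  / sqrt (2 * PI) * RInt_gen (integrand g z) (Rbar_locally m_infty) (at_point t).

Definition fabs (g z t : R) : R := Rabs (ftilde g z t).

Definition tplus (g : R) : R := 3/2 * g + / g * ln (1 - sqrt (1 - exp (- g^2))).
Definition tminus (g : R) : R := 3/2 * g + / g * ln (1 + sqrt (1 - exp (- g^2))).

From Stdlib Require Import Reals Lra.
From Coquelicot Require Import Coquelicot.
Open Scope R_scope.

(* Up to the factor [/ sqrt (2 * PI)], [ftilde] is the primitive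
   [F t = z/2 (G t + G (t - 2g) - 2 G (t - g))] of the integrand, where [G] is
   the primitive of [exp (- x^2/2)] vanishing at 0.  As [G] is odd, [F] is
   antisymmetric about [g]: [F (2g - t) = - F t]; and [F] tends to 0 at [-oo]
   because it only involves integrals over windows of width [g].
   In the variable [u = exp (g t - 3 g^2/2)] the integrand is a positive multiple
   of [(u - 1)^2 - (1 - exp (- g^2))], so it is positive before [tplus] and
   negative between [tplus] and [tminus], with [tplus + tminus = 2g].  Hence [F]
   increases from 0 to its maximum at [tplus], decreases to the mirror value at
   [tminus], and [|F|] is strictly smaller everywhere else. *)

Definition gauss (x : R) : R := exp (- x^2 / 2).

Lemma gauss_pos (x : R) : 0 < gauss x.
Proof. apply exp_pos. Qed.

Lemma gauss_opp (x : R) : gauss (- x) = gauss x.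
Proof. unfold gauss. now replace ((- x)^2) with (x^2) by ring. Qed.

Lemma continuous_gauss (x : R) : continuous gauss x.
Proof. apply (ex_derive_continuous (V := R_NormedModule)). unfold gauss. auto_derive. easy. Qed.

Lemma ex_RInt_gauss (a b : R) : ex_RInt gauss a b.
Proof.
  apply (ex_RInt_continuous (V := R_CompleteNormedModule)). intros; apply continuous_gauss.
Qed.

(* from [(x + 1)^2 >= 0] *)
Lemma gauss_le_exp (x : R) : gauss x <= exp (x + / 2).
Proof.
  unfold gauss.
  destruct (Rle_lt_or_eq_dec (- x^2 / 2) (x + / 2)) as [Hlt | ->].
  - pose proof (pow2_ge_0 (x + 1)). nra.
  - now left; apply exp_increasing.
  - now right.
Qed.

Lemma RInt_gauss_bound (a b : R) : a <= b -> 0 <= RInt gauss a b <= exp (b + / 2).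
Proof.
  intros Hab. split.
  - apply RInt_ge_0; [easy | apply ex_RInt_gauss |].
    intros x _. left. apply gauss_pos.
  - assert (Hprim : is_RInt (fun x => exp (x + / 2)) a b (exp (b + / 2) - exp (a + / 2))).
    { apply (is_RInt_derive (fun x => exp (x + / 2))).
      - intros x _. auto_derive; [easy | ring].
      - intros x _. apply (ex_derive_continuous (V := R_NormedModule)). auto_derive. easy. }
    apply Rle_trans with (exp (b + / 2) - exp (a + / 2)).
    + rewrite <- (is_RInt_unique _ _ _ _ Hprim).
      apply RInt_le; [easy | apply ex_RInt_gauss | eexists; exact Hprim |].
      intros x _. apply gauss_le_exp.
    + pose proof (exp_pos (a + / 2)). lra.
Qed.

Lemma is_lim_RInt_gauss_window (a b : R) :
  a <= b -> is_lim (fun t => RInt gauss (t - b) (t - a)) m_infty 0.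
Proof.
  intros Hab.
  assert (Hexp : is_lim (fun t => exp (/ 2 - a) * exp t) m_infty 0).
  { replace (Finite 0) with (Rbar_mult (exp (/ 2 - a)) 0) by (simpl; f_equal; ring).
    apply is_lim_scal_l, is_lim_exp_m. }
  apply (is_lim_le_le_loc (fun _ => 0) (fun t => exp (/ 2 - a) * exp t));
    [| apply is_lim_const | easy].
  apply filter_forall. intros t.
  rewrite <- exp_plus. replace (/ 2 - a + t) with (t - a + / 2) by ring.
  apply RInt_gauss_bound. lra.
Qed.

Definition gauss_prim (t : R) : R := RInt gauss 0 t.

Lemma is_derive_gauss_prim (t : R) : is_derive gauss_prim t (gauss t).
Proof.
  apply (is_derive_RInt gauss gauss_prim 0 t); [| apply continuous_gauss].
  apply filter_forall. intros u. apply (RInt_correct (V := R_CompleteNormedModule)), ex_RInt_gauss.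
Qed.

Lemma gauss_prim_sub (a b : R) : gauss_prim b - gauss_prim a = RInt gauss a b.
Proof.
  unfold gauss_prim. rewrite <- (RInt_Chasles gauss 0 a b) by apply ex_RInt_gauss.
  change (plus ?x ?y) with (x + y). ring.
Qed.

Lemma gauss_prim_opp (t : R) : gauss_prim (- t) = - gauss_prim t.
Proof.
  unfold gauss_prim.
  assert (Hsub := RInt_comp_lin gauss (-1) 0 0 t).
  replace (-1 * 0 + 0) with 0 in Hsub by ring.
  replace (-1 * t + 0) with (- t) in Hsub by ring.
  rewrite <- Hsub by apply ex_RInt_gauss.
  rewrite <- (RInt_opp gauss) by apply ex_RInt_gauss.
  apply RInt_ext. intros x _.
  change (scal ?u ?v) with (u * v). change (opp ?v) with (- v).
  replace (-1 * x + 0) with (- x) by ring. rewrite gauss_opp.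
  change (-1 * gauss x = - gauss x). ring.
Qed.

Definition integrand_prim (g z t : R) : R :=
  z / 2 * (gauss_prim t + gauss_prim (t - 2 * g) - 2 * gauss_prim (t - g)).

Lemma is_derive_integrand_prim (g z t : R) :
  is_derive (integrand_prim g z) t (integrand g z t).
Proof.
  unfold integrand_prim. auto_derive.
  - repeat split; eexists; apply is_derive_gauss_prim.
  - rewrite !(is_derive_unique _ _ _ (is_derive_gauss_prim _)).
    unfold integrand, gauss.
    replace (t + - (2 * g)) with (t - 2 * g) by ring.
    replace (t + - g) with (t - g) by ring.
    field.
Qed.

Lemma continuous_integrand (g z t : R) : continuous (integrand g z) t.
Proof. apply (ex_derive_continuous (V := R_NormedModule)). unfold integrand. auto_derive. easy. Qed.

Lemma integrand_prim_reflect (g z t : R) :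
  integrand_prim g z (2 * g - t) = - integrand_prim g z t.
Proof.
  unfold integrand_prim.
  replace (2 * g - t) with (- (t - 2 * g)) by ring.
  replace (- (t - 2 * g) - 2 * g) with (- t) by ring.
  replace (- (t - 2 * g) - g) with (- (t - g)) by ring.
  rewrite !gauss_prim_opp. ring.
Qed.

Lemma is_lim_integrand_prim (g z : R) : 0 <= g -> is_lim (integrand_prim g z) m_infty 0.
Proof.
  intros Hg.
  apply is_lim_ext with
    (fun t => z / 2 * (RInt gauss (t - g) (t - 0) - RInt gauss (t - 2 * g) (t - g))).
  { intros t. rewrite <- !gauss_prim_sub. unfold integrand_prim.
    replace (t - 0) with t by ring. ring. }
  replace (Finite 0) with (Rbar_mult (z / 2) (0 - 0)) by (simpl; f_equal; ring).
  apply is_lim_scal_l, is_lim_minus'; apply is_lim_RInt_gauss_window; lra.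
Qed.

Lemma ftilde_eq (g z t : R) :
  0 <= g -> ftilde g z t = / sqrt (2 * PI) * integrand_prim g z t.
Proof.
  intros Hg. unfold ftilde. f_equal.
  apply is_RInt_gen_unique.
  replace (integrand_prim g z t) with (integrand_prim g z t - 0) by ring.
  apply (is_RInt_gen_ext (Derive (integrand_prim g z))).
  { apply filter_forall. intros ab x _. apply is_derive_unique, is_derive_integrand_prim. }
  apply is_RInt_gen_Derive.
  - apply filter_forall. intros ab x _. eexists; apply is_derive_integrand_prim.
  - apply filter_forall. intros ab x _.
    apply (continuous_ext (integrand g z)); [| apply continuous_integrand].
    intros y. symmetry. apply is_derive_unique, is_derive_integrand_prim.
  - now apply is_lim_integrand_prim.
  - intros P HP. exact (locally_singleton _ _ HP).
Qed.

Definition tilt (g t : R) : R := exp (g * t - 3 / 2 * g^2).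

Definition sroot (g : R) : R := sqrt (1 - exp (- g^2)).

Lemma sroot_sq (g : R) : sroot g ^ 2 = 1 - exp (- g^2).
Proof.
  unfold sroot. rewrite <- Rsqr_pow2. apply Rsqr_sqrt.
  assert (exp (- g^2) <= 1); [| lra].
  rewrite <- exp_0. destruct (Rle_lt_or_eq_dec (- g^2) 0) as [Hlt | ->].
  - pose proof (pow2_ge_0 g). lra.
  - now left; apply exp_increasing.
  - now right.
Qed.

Lemma sroot_bounds (g : R) : 0 < g -> 0 < sroot g < 1.
Proof.
  intros Hg. pose proof (sroot_sq g). pose proof (exp_pos (- g^2)).
  assert (0 < sroot g); [| nra].
  apply sqrt_lt_R0.
  assert (exp (- g^2) < exp 0) by (apply exp_increasing; nra).
  rewrite exp_0 in *. lra.
Qed.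

Lemma integrand_factor (g z t : R) :
  integrand g z t = z / 2 * exp (- (t - g)^2 / 2) / tilt g t
    * ((tilt g t - (1 - sroot g)) * (tilt g t - (1 + sroot g))).
Proof.
  replace ((tilt g t - (1 - sroot g)) * (tilt g t - (1 + sroot g)))
    with (tilt g t ^ 2 - 2 * tilt g t + exp (- g^2)) by (pose proof (sroot_sq g); nra).
  unfold integrand, tilt.
  assert (Hleft : exp (- t^2 / 2)
    = exp (- (t - g)^2 / 2) * exp (- g^2) / exp (g * t - 3 / 2 * g^2)).
  { unfold Rdiv. rewrite <- exp_Ropp, <- !exp_plus. f_equal. field. }
  assert (Hright : exp (- (t - 2 * g)^2 / 2)
    = exp (- (t - g)^2 / 2) * exp (g * t - 3 / 2 * g^2)).
  { rewrite <- exp_plus. f_equal. field. }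
  rewrite Hleft, Hright. pose proof (exp_pos (g * t - 3 / 2 * g^2)). field. lra.
Qed.

Lemma tilt_lt (g x y : R) : 0 < g -> x < y -> tilt g x < tilt g y.
Proof. intros Hg Hxy. apply exp_increasing. nra. Qed.

Lemma tilt_tplus (g : R) : 0 < g -> tilt g (tplus g) = 1 - sroot g.
Proof.
  intros Hg. pose proof (sroot_bounds g Hg).
  unfold tilt, tplus. fold (sroot g).
  replace (g * (3 / 2 * g + / g * ln (1 - sroot g)) - 3 / 2 * g^2)
    with (ln (1 - sroot g)) by (field; lra).
  apply exp_ln. lra.
Qed.

Lemma tilt_tminus (g : R) : 0 < g -> tilt g (tminus g) = 1 + sroot g.
Proof.
  intros Hg. pose proof (sroot_bounds g Hg).
  unfold tilt, tminus. fold (sroot g).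
  replace (g * (3 / 2 * g + / g * ln (1 + sroot g)) - 3 / 2 * g^2)
    with (ln (1 + sroot g)) by (field; lra).
  apply exp_ln. lra.
Qed.

(* [tilt g tplus * tilt g tminus = 1 - sroot g ^ 2 = exp (- g^2)]. *)
Lemma tplus_add_tminus (g : R) : 0 < g -> tplus g + tminus g = 2 * g.
Proof.
  intros Hg.
  assert (Hprod : tilt g (tplus g) * tilt g (tminus g) = exp (- g^2)).
  { rewrite tilt_tplus, tilt_tminus by easy. pose proof (sroot_sq g). nra. }
  unfold tilt in Hprod. rewrite <- exp_plus in Hprod. apply exp_inv in Hprod.
  apply (Rmult_eq_reg_l g); [nra | lra].
Qed.

Lemma integrand_factor_coef_pos (g z t : R) :
  0 < z -> 0 < z / 2 * exp (- (t - g)^2 / 2) / tilt g t.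
Proof.
  intros Hz. pose proof (exp_pos (- (t - g)^2 / 2)).
  apply Rdiv_lt_0_compat; [nra | apply exp_pos].
Qed.

Lemma integrand_pos_lt_tplus (g z t : R) :
  0 < g -> 0 < z -> t < tplus g -> 0 < integrand g z t.
Proof.
  intros Hg Hz Ht. rewrite integrand_factor.
  pose proof (sroot_bounds g Hg).
  apply (tilt_lt g) in Ht; [| easy]. rewrite tilt_tplus in Ht by easy.
  apply Rmult_lt_0_compat; [now apply integrand_factor_coef_pos | nra].
Qed.

Lemma integrand_neg_between (g z t : R) :
  0 < g -> 0 < z -> tplus g < t < tminus g -> integrand g z t < 0.
Proof.
  intros Hg Hz [Hl Hr]. rewrite integrand_factor.
  pose proof (sroot_bounds g Hg).
  apply (tilt_lt g) in Hl; [| easy]. rewrite tilt_tplus in Hl by easy.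
  apply (tilt_lt g) in Hr; [| easy]. rewrite tilt_tminus in Hr by easy.
  pose proof (integrand_factor_coef_pos g z t Hz).
  assert ((tilt g t - (1 - sroot g)) * (tilt g t - (1 + sroot g)) < 0) by nra.
  nra.
Qed.

Lemma is_derive_pos_lt (f df : R -> R) (x y : R) :
  x < y -> (forall t, x <= t <= y -> is_derive f t (df t)) ->
  (forall t, x < t < y -> 0 < df t) -> f x < f y.
Proof.
  intros Hxy Hder Hpos.
  destruct (MVT_cor2 f df x y Hxy) as [c [Hmvt Hc]].
  { intros c Hc. now apply is_derive_Reals, Hder. }
  pose proof (Hpos c Hc). nra.
Qed.

Lemma integrand_prim_lt_tplus (g z x y : R) :
  0 < g -> 0 < z -> x < y <= tplus g -> integrand_prim g z x < integrand_prim g z y.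
Proof.
  intros Hg Hz [Hxy Hy].
  apply (is_derive_pos_lt _ (integrand g z)); [easy | intros; apply is_derive_integrand_prim |].
  intros t Ht. apply integrand_pos_lt_tplus; lra.
Qed.

Lemma integrand_prim_gt_between (g z x y : R) :
  0 < g -> 0 < z -> tplus g <= x -> x < y <= tminus g ->
  integrand_prim g z y < integrand_prim g z x.
Proof.
  intros Hg Hz Hx [Hxy Hy].
  apply Ropp_lt_cancel.
  apply (is_derive_pos_lt (fun t => - integrand_prim g z t) (fun t => - integrand g z t));
    [easy | |].
  - intros t _.
    apply (is_derive_opp (K := R_AbsRing) (V := R_NormedModule) (integrand_prim g z)),
      is_derive_integrand_prim.
  - intros t Ht. assert (integrand g z t < 0) by (apply integrand_neg_between; lra). lra.
Qed.

Section AntisymmetricBump.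

Variables (q : R -> R) (a b : R).
Hypothesis q_incr : forall x y, x < y <= a -> q x < q y.
Hypothesis q_decr : forall x y, a <= x -> x < y <= b -> q y < q x.
Hypothesis q_reflect : forall t, q (a + b - t) = - q t.
Hypothesis q_lim : is_lim q m_infty 0.

Lemma bump_pos (t : R) : t <= a -> 0 < q t.
Proof.
  intros Ht.
  assert (Hle : Rbar_le 0 (q (t - 1))).
  { apply (is_lim_le_loc q (fun _ => q (t - 1)) m_infty); [| exact q_lim | apply is_lim_const].
    exists (t - 1). intros s Hs. left. apply q_incr. lra. }
  simpl in Hle. assert (q (t - 1) < q t) by (apply q_incr; lra). lra.
Qed.

Lemma bump_right : q b = - q a.
Proof. rewrite <- q_reflect. f_equal. ring. Qed.

Lemma bump_abs_lt (t : R) : t <> a -> t <> b -> Rabs (q t) < q a.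
Proof.
  intros Ha Hb.
  destruct (Rtotal_order t a) as [Hta | [-> | Hat]]; [| easy |].
  - pose proof (bump_pos t (Rlt_le _ _ Hta)). pose proof (q_incr t a (conj Hta (Rle_refl a))).
    rewrite Rabs_right; lra.
  - destruct (Rtotal_order t b) as [Htb | [-> | Hbt]]; [| easy |].
    + assert (q t < q a) by (apply q_decr; lra). assert (q b < q t) by (apply q_decr; lra).
      rewrite bump_right in *. apply Rabs_def1; lra.
    + assert (Hq : q t = - q (a + b - t)) by (rewrite <- q_reflect; f_equal; ring).
      assert (0 < q (a + b - t)) by (apply bump_pos; lra).
      assert (q (a + b - t) < q a) by (apply q_incr; lra).
      rewrite Hq, Rabs_Ropp, Rabs_right; lra.
Qed.

Lemma bump_abs_argmax (t : R) :
  (forall s, Rabs (q s) <= Rabs (q t)) <-> t = a \/ t = b.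
Proof.
  assert (Hmax : forall s, Rabs (q s) <= q a).
  { intros s. destruct (Req_dec s a) as [-> | Ha].
    - right. apply Rabs_right. left. apply bump_pos, Rle_refl.
    - destruct (Req_dec s b) as [-> | Hb].
      + right. rewrite bump_right, Rabs_Ropp. apply Rabs_right. left. apply bump_pos, Rle_refl.
      + left. now apply bump_abs_lt. }
  split.
  - intros Hall. destruct (Req_dec t a) as [| Ha]; [now left |].
    destruct (Req_dec t b) as [| Hb]; [now right |].
    specialize (Hall a). pose proof (bump_abs_lt t Ha Hb).
    pose proof (Rle_abs (q a)). lra.
  - intros Ht s. apply Rle_trans with (q a); [easy |].
    destruct Ht as [-> | ->]; [apply Rle_abs |].
    rewrite bump_right, Rabs_Ropp. apply Rle_abs.
Qed.

End AntisymmetricBump.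

Theorem lemma6 (g z : R) (hg : 0 < g <= 1) (hz : 0 < z <= 1) :
  (forall t : R, (forall s : R, fabs g z s <= fabs g z t) <-> (t = tplus g \/ t = tminus g))
  /\ ftilde g z (tplus g) > 0 /\ ftilde g z (tminus g) < 0.
Proof.
  destruct hg as [Hg _], hz as [Hz _].
  set (q := integrand_prim g z).
  assert (Hc : 0 < / sqrt (2 * PI)).
  { apply Rinv_0_lt_compat, sqrt_lt_R0. pose proof PI_RGT_0. lra. }
  assert (Hf : forall t, ftilde g z t = / sqrt (2 * PI) * q t)
    by (intros; apply ftilde_eq; lra).
  assert (Hfabs : forall t, fabs g z t = / sqrt (2 * PI) * Rabs (q t)).
  { intros t. unfold fabs. rewrite Hf, Rabs_mult, (Rabs_right (/ sqrt (2 * PI))); lra. }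
  assert (Hreflect : forall t, q (tplus g + tminus g - t) = - q t).
  { intros t. rewrite tplus_add_tminus by easy. apply integrand_prim_reflect. }
  pose proof (fun x y => integrand_prim_lt_tplus g z x y Hg Hz) as Hincr.
  pose proof (fun x y => integrand_prim_gt_between g z x y Hg Hz) as Hdecr.
  pose proof (is_lim_integrand_prim g z (Rlt_le _ _ Hg)) as Hlim.
  split; [| split].
  - intros t. rewrite <- (bump_abs_argmax q _ _ Hincr Hdecr Hreflect Hlim t).
    split; intros Hmax s; specialize (Hmax s); rewrite !Hfabs in *.
    + now apply Rmult_le_reg_l in Hmax.
    + now apply Rmult_le_compat_l; [left |].
  - rewrite Hf. apply Rmult_lt_0_compat; [easy |].
    apply (bump_pos q _ Hincr Hlim), Rle_refl.
  - rewrite Hf, (bump_right q _ _ Hreflect).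
    pose proof (bump_pos q _ Hincr Hlim (tplus g) (Rle_refl _)). nra.
Qed.
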